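(* There exists a coefficient vector $\mathbf a=(a_0,a_1,a_2,\dots)\in\mathbb{R}^{\mathbb{N}}$ such that for every graph $G$, if $G$ is geometrically rigid then the linear centrality $f^{\mathbf a}$ has no ties on $G$.
   Context: A graph $G$ is a finite directed graph with node set $V_G=\{0,\dots,n-1\}$ and arc set $E_G\subseteq V_G\times V_G$; $d_G(x,y)$ is the shortest directed path length from $x$ to $y$ ($\infty$ if none). The distance-count matrix $C_G\in\mathbb{R}^{n\times n}$ has entries $(C_G)_{i,k}=|\{j\in V_G: d_G(j,i)=k\}|$ for $i,k\in\{0,\dots,n-1\}$. $G$ is geometrically rigid if the rows of $C_G$ are pairwise distinct. For $\mathbf a\in\mathbb{R}^{\mathbb{N}}$, the linear centrality $f^{\mathbf a}$ is defined by $f^{\mathbf a}_G(i)=\sum_{k=0}^{n-1}(C_G)_{i,k}\,a_k$. A centrality $f$ has no ties on $G$ if $f_G(x)\ne f_G(y)$ for all distinct $x,y\in V_G$. *)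

From mathcomp Require Import all_boot all_order all_algebra.
From mathcomp Require Import Rstruct.
From Stdlib Require Import Reals.
Set Implicit Arguments. Unset Strict Implicit. Unset Printing Implicit Defensive.
Import GRing.Theory Num.Theory.
Local Open Scope ring_scope.

(* A directed graph on V = {0..n-1}: arc relation E (self-loops allowed). *)

Fixpoint reach_exact (n : nat) (E : rel 'I_n) (k : nat) (x : 'I_n) : {set 'I_n} :=
  match k with
  | 0 => [set x]
  | k'.+1 => [set y | [exists z in reach_exact E k' x, E z y]]
  end.

(* d_G(x,y) = k : the shortest directed path from x to y has length k
   (shortest walk length = shortest path length). *)
Definition dist_eq (n : nat) (E : rel 'I_n) (x y : 'I_n) (k : nat) : bool :=
  (y \in reach_exact E k x) && [forall m : 'I_k, y \notin reach_exact E m x].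

(* (C_G)_{i,k} = |{ j : d_G(j,i) = k }| *)
Definition dcount (n : nat) (E : rel 'I_n) (i : 'I_n) (k : nat) : nat :=
  #|[set j : 'I_n | dist_eq E j i k]|.

Definition geometrically_rigid (n : nat) (E : rel 'I_n) : Prop :=
  forall i i' : 'I_n, i != i' ->
    exists k : 'I_n, dcount E i k <> dcount E i' k.

Definition lin_centrality (a : nat -> R) (n : nat) (E : rel 'I_n) (i : 'I_n) : R :=
  \sum_(k < n) (dcount E i k)%:R * a k.

Definition no_ties (n : nat) (f : 'I_n -> R) : Prop :=
  forall x y : 'I_n, x != y -> f x <> f y.

(** Choose [a_0, a_1, ...] inductively so that each [a_n] lies outside the
    countable set of rational combinations of [a_0, ..., a_(n-1)]; this is
    possible because a countable set of reals is Lebesgue-null.  The [a_k] are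
    then linearly independent over the rationals, so [f^a_G(i)] determines the
    whole row [i] of [C_G], and distinct rows give distinct centralities. *)

From mathcomp Require Import all_boot all_order all_algebra.
From mathcomp Require Import Rstruct.
From Stdlib Require Import Reals.
From mathcomp Require Import boolp classical_sets cardinality reals.
From mathcomp Require Import interval_inference ereal measure lebesgue_measure.
Import GRing.Theory Num.Theory.

Local Open Scope classical_set_scope.
Local Open Scope ring_scope.

Section RationallyIndependentSequence.
Variable R : realType.

Lemma countable_nonfull {A : set R} : countable A -> exists x, ~ A x.
Proof.
move=> cA; apply/not_existsP => /= Afull.
have sub01 : `[0, 1]%classic `<=` A by move=> x _; apply/not_notP; exact: Afull.
have := countable_lebesgue_measure0 (sub_countable (subset_card_le sub01) cA).
rewrite lebesgue_measure_itv /= lte_fin ltr01 sube0.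
by move/eqP; rewrite eqe oner_eq0.
Qed.

Definition rat_span (s : seq R) : set R :=
  range (fun p : seq int * int =>
    (\sum_(i < size s) (p.1`_i)%:~R * s`_i) / (p.2)%:~R).

Lemma countable_rat_span (s : seq R) : countable (rat_span s).
Proof. exact: card_le_trans (card_image_le _ _) (countableP _). Qed.

Definition fresh (s : seq R) : R := projT1 (cid (countable_nonfull (countable_rat_span s))).

Lemma fresh_notin_rat_span (s : seq R) : ~ rat_span s (fresh s).
Proof. exact: projT2 (cid (countable_nonfull (countable_rat_span s))). Qed.

Fixpoint indep_prefix (n : nat) : seq R :=
  if n is n'.+1 then rcons (indep_prefix n') (fresh (indep_prefix n')) else [::].

Definition indep_seq (n : nat) : R := fresh (indep_prefix n).

Lemma indep_prefixE (n : nat) : indep_prefix n = mkseq indep_seq n.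
Proof. by elim: n => //= n IHn; rewrite -/(indep_seq n) IHn mkseqS. Qed.

Lemma indep_seq_notin_rat_span (n : nat) : ~ rat_span (mkseq indep_seq n) (indep_seq n).
Proof. by rewrite -indep_prefixE; exact: fresh_notin_rat_span. Qed.

Lemma indep_seq_int_comb_eq0 (n : nat) (d : nat -> int) :
  \sum_(k < n) (d k)%:~R * indep_seq k = 0 -> forall k : nat, (k < n)%nat -> d k = 0.
Proof.
elim: n => [// | n IHn]; rewrite big_ord_recr /=.
have [dn0 | dn_neq0] := eqVneq (d n) 0.
  rewrite dn0 mul0r addr0 => /IHn dP k; rewrite ltnS leq_eqVlt.
  by case/orP => [/eqP -> // | /dP].
move=> sum_eq0; exfalso; apply: (indep_seq_notin_rat_span n).
exists (mkseq (fun i => - d i) n, d n) => //=.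
have dnR : (d n)%:~R != 0 :> R by rewrite intr_eq0.
apply/(canLR (mulfK dnR)); rewrite size_mkseq.
have -> : \sum_(i < n) ((mkseq (fun i => - d i) n)`_i)%:~R * (mkseq indep_seq n)`_i
        = - \sum_(i < n) (d i)%:~R * indep_seq i.
  by rewrite -sumrN; apply: eq_bigr => i _; rewrite !nth_mkseq // mulrNz mulNr.
by rewrite mulrC; apply/eqP; rewrite eq_sym -addr_eq0 addrC sum_eq0.
Qed.

Lemma indep_seq_nat_comb_inj (n : nat) (c c' : nat -> nat) :
  \sum_(k < n) (c k)%:R * indep_seq k = \sum_(k < n) (c' k)%:R * indep_seq k ->
  forall k : nat, (k < n)%nat -> c k = c' k.
Proof.
move=> sum_eq k lt_kn; apply/eqP; rewrite -eqz_nat -subr_eq0; apply/eqP.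
apply: (@indep_seq_int_comb_eq0 n (fun k => (c k)%:Z - (c' k)%:Z)) lt_kn.
under eq_bigr => i _ do rewrite intrB mulrBl.
by rewrite sumrB sum_eq subrr.
Qed.

End RationallyIndependentSequence.

Theorem theorem3 :
  exists a : nat -> R,
    forall (n : nat) (E : rel 'I_n),
      geometrically_rigid E -> no_ties (lin_centrality a E).
Proof.
exists (@indep_seq R) => n E rigid x y xy fxy.
have [k neq_k] := rigid x y xy; apply: neq_k.
exact: indep_seq_nat_comb_inj fxy _ (ltn_ord k).
Qed.
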